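(* Let $q=2^s$, $s\ge 1$, and let $C_2\subseteq C_1\subseteq\mathbb F_q^n$ be $\mathbb F_q$-linear codes. If $T^{\otimes n}$ maps $\mathrm{CSS}(C_1,C_2)$ into itself, then $(T^{(\lambda)})^{\otimes n}$ maps $\mathrm{CSS}(C_1,C_2)$ into itself for every $\lambda\in\mathbb F_q$.
   Context: Let $q=2^s$ and $\mathrm{tr}:\mathbb F_q\to\mathbb F_2$, $\mathrm{tr}(x)=\sum_{i=0}^{s-1}x^{2^i}$, the absolute trace. Let $\mathcal H=\mathbb C^q$ with orthonormal basis $\{|x\rangle:x\in\mathbb F_q\}$ and $\mathcal H^{\otimes n}$ with basis $|x\rangle=|x_1\rangle\otimes\cdots\otimes|x_n\rangle$, $x\in\mathbb F_q^n$. For $\lambda\in\mathbb F_q$, $T^{(\lambda)}=\sum_{x\in\mathbb F_q}e^{i\pi\,\mathrm{tr}(\lambda x)/4}|x\rangle\langle x|$, where $\mathrm{tr}(\lambda x)\in\{0,1\}$ is regarded as an integer; $T=T^{(1)}$. For $\mathbb F_q$-linear codes $C_2\subseteq C_1\subseteq\mathbb F_q^n$, the CSS code $\mathrm{CSS}(C_1,C_2)\subseteq\mathcal H^{\otimes n}$ is the complex linear span of the states $|w+C_2\rangle=|C_2|^{-1/2}\sum_{c\in C_2}|w+c\rangle$ for $w\in C_1$. *)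

From HB Require Import structures.
From mathcomp Require Import all_boot all_order all_algebra all_field.
Set Implicit Arguments. Unset Strict Implicit. Unset Printing Implicit Defensive.
Import Order.TTheory GRing.Theory Num.Theory.
Local Open Scope ring_scope.

(* Complex amplitudes are taken in algC (algebraic complex numbers);
   e^{i pi/4} = (1 + i)/sqrt 2 is algebraic. *)

Definition abs_trace (F : finFieldType) (s : nat) (x : F) : F :=
  \sum_(i < s) x ^+ (2 ^ i).

Definition omega8 : algC := (1 + 'i) / sqrtC 2%:R.

(* e^{i pi t / 4} for t = tr(.) in {0,1} regarded as an integer *)
Definition phase (F : finFieldType) (t : F) : algC :=
  if t == 0 then 1 else omega8.

(* states of H^{(x) n}: functions on the basis {|x> : x in F_q^n} *)
Definition state (F : finFieldType) (n : nat) := {ffun 'rV[F]_n -> algC}.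

Definition ket (F : finFieldType) (n : nat) (y : 'rV[F]_n) : state F n :=
  [ffun x => (x == y)%:R].

Definition Tlam_n (F : finFieldType) (s n : nat) (lam : F) (psi : state F n)
  : state F n :=
  [ffun x : 'rV[F]_n => (\prod_(i < n) phase (abs_trace s (lam * x ord0 i))) * psi x].

Definition coset_state (F : finFieldType) (n : nat)
  (C2 : {vspace 'rV[F]_n}) (w : 'rV[F]_n) : state F n :=
  [ffun x => (sqrtC (#|[set c : 'rV[F]_n | c \in C2]|%:R))^-1 *
    \sum_(c : 'rV[F]_n | c \in C2) ket (w + c) x].

Definition inCSS (F : finFieldType) (n : nat)
  (C1 C2 : {vspace 'rV[F]_n}) (psi : state F n) : Prop :=
  exists a : 'rV[F]_n -> algC,
    psi = [ffun x => \sum_(w : 'rV[F]_n | w \in C1) a w * coset_state C2 w x].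

From HB Require Import structures.
From mathcomp Require Import all_boot all_order all_algebra all_field.
Import GRing.Theory Num.Theory.
Set Implicit Arguments. Unset Strict Implicit. Unset Printing Implicit Defensive.
Local Open Scope ring_scope.

(* For lam != 0, T^(lam) is conjugate to T by the dilation |x> |-> |lam x>,
   because the phase of T^(lam) at x is the phase of T at lam x. Because C1 and C2
   are F_q-linear, dilations permute the coset states of CSS(C1, C2) and hence
   preserve the code; the case lam = 0 is trivial as T^(0) is the identity. *)

Section Dilation.

Variables (F : finFieldType) (n : nat).
Implicit Types (U : {vspace 'rV[F]_n}) (psi : state F n).

Definition dilate (mu : F) psi : state F n := [ffun x => psi (mu *: x)].

Lemma memvZ_eq U (mu : F) (v : 'rV[F]_n) :
  mu != 0 -> (mu *: v \in U) = (v \in U).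
Proof. by move=> mu0; rewrite rpredZeq (negbTE mu0). Qed.

Lemma sum_memv_dilate U (mu : F) (G : 'rV[F]_n -> algC) : mu != 0 ->
  \sum_(c | c \in U) G c = \sum_(c | c \in U) G (mu *: c).
Proof.
move=> mu0; rewrite (reindex_inj (scalerI mu0)) /=.
by apply: eq_bigl => c; rewrite memvZ_eq.
Qed.

Lemma coset_state_dilate (C2 : {vspace 'rV[F]_n}) (mu : F) (w x : 'rV[F]_n) :
  mu != 0 ->
  coset_state C2 (mu *: w) (mu *: x) = coset_state C2 w x.
Proof.
move=> mu0; rewrite !ffunE (sum_memv_dilate _ _ mu0); congr (_ * _).
by apply: eq_bigr => c _; rewrite !ffunE -scalerDr (inj_eq (scalerI mu0)).
Qed.

Lemma inCSS_dilate (C1 C2 : {vspace 'rV[F]_n}) (mu : F) psi :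
  mu != 0 -> inCSS C1 C2 psi -> inCSS C1 C2 (dilate mu psi).
Proof.
move=> mu0 [a ->]; exists (fun w => a (mu *: w)).
apply/ffunP => x; rewrite !ffunE (sum_memv_dilate _ _ mu0).
by apply: eq_bigr => w _; rewrite coset_state_dilate.
Qed.

End Dilation.

Lemma abs_trace0 (F : finFieldType) (s : nat) : abs_trace s (0 : F) = 0.
Proof. by apply: big1 => i _; rewrite expr0n expn_eq0. Qed.

Lemma Tlam_n0 (F : finFieldType) (s n : nat) (psi : state F n) :
  Tlam_n s 0 psi = psi.
Proof.
apply/ffunP => x; rewrite ffunE big1 ?mul1r // => i _.
by rewrite mul0r abs_trace0 /phase eqxx.
Qed.

Lemma Tlam_n_dilate (F : finFieldType) (s n : nat) (lam : F) (psi : state F n) :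
  lam != 0 -> Tlam_n s lam psi = dilate lam (Tlam_n s 1 (dilate lam^-1 psi)).
Proof.
move=> lam0; apply/ffunP => x; rewrite !ffunE scalerA mulVf // scale1r.
by congr (_ * _); apply: eq_bigr => i _; rewrite mul1r mxE.
Qed.

Theorem mainTheorem7 (s : nat) (hs : (1 <= s)%N) (F : finFieldType)
  (hF : #|F| = (2 ^ s)%N) (n : nat) (C1 C2 : {vspace 'rV[F]_n})
  (hC : (C2 <= C1)%VS) :
  (forall psi : state F n, inCSS C1 C2 psi -> inCSS C1 C2 (Tlam_n s 1 psi)) ->
  forall (lam : F) (psi : state F n),
    inCSS C1 C2 psi -> inCSS C1 C2 (Tlam_n s lam psi).
Proof.
move=> HT lam psi Hpsi.
have [->|lam0] := eqVneq lam 0; first by rewrite Tlam_n0.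
have lamV0 : lam^-1 != 0 by rewrite invr_eq0.
rewrite Tlam_n_dilate //.
exact/(inCSS_dilate lam0)/HT/(inCSS_dilate lamV0).
Qed.
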